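(* Let $X$ be a finite-dimensional normed space and let $(A_n)_{n\in\mathbb N}$ be a nested (i.e. $A_{n+1}\subset A_n$) sequence of unbounded connected subsets of $X$. Then either $\bigcap_{n\in\mathbb N}A_n=\emptyset$, or $\bigcap_{n\in\mathbb N}A_n^\varepsilon$ is unbounded for every $\varepsilon>0$.
   Context: For a set $A\subset X$ and $\varepsilon>0$, $A^\varepsilon=\{x\in X:\mathrm{dist}(x,A)\le\varepsilon\}$. *)

From HB Require Import structures.
From mathcomp Require Import all_boot all_order all_algebra.
From mathcomp Require Import all_classical all_reals all_analysis.
Set Implicit Arguments. Unset Strict Implicit. Unset Printing Implicit Defensive.
Import Order.TTheory GRing.Theory Num.Theory.
Import numFieldNormedType.Exports.
Local Open Scope classical_set_scope.
Local Open Scope ring_scope.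

Definition finite_dim (R : realType) (X : normedModType R) : Prop :=
  exists (n : nat) (e : 'I_n -> X),
    forall x : X, exists c : 'I_n -> R, x = \sum_(i < n) c i *: e i.

Definition dist_set (R : realType) (X : normedModType R) (x : X) (A : set X) : R :=
  inf [set `|x - a| | a in A].

Definition fattening (R : realType) (X : normedModType R) (A : set X) (eps : R) : set X :=
  [set x | dist_set x A <= eps].

(** Pick [x0] in the intersection and suppose the fattened intersection lies
    in the ball of radius [M].  Each [A n] is connected, contains [x0] and is
    unbounded, so it meets the sphere of centre [x0] and radius [r], for [r]
    much larger than [M].  The chosen points [a n] form a bounded sequence,
    which by local compactness of finite-dimensional spaces has a cluster
    point [y].  Infinitely many [a n] lie [eps]-close to [y], and by nestedness
    they lie in every [A k]; hence [y] is in every [A k ^ eps] although it is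
    far from the origin. *)

From HB Require Import structures.
From mathcomp Require Import all_boot all_order all_algebra.
From mathcomp Require Import all_classical all_reals all_analysis.
From mathcomp Require Import lra.
Import Order.TTheory GRing.Theory Num.Theory.
Import numFieldNormedType.Exports.
Local Open Scope classical_set_scope.
Local Open Scope ring_scope.

Set Implicit Arguments.
Unset Strict Implicit.

Lemma nested_subset (T : Type) (A : nat -> set T) :
  (forall n, A n.+1 `<=` A n) -> forall k j, (k <= j)%N -> A j `<=` A k.
Proof.
move=> nest k j /subnK <-; elim: (j - k)%N => [|i IH] //= x.
by rewrite addSn => /nest /IH.
Qed.

Section NormedSpace.
Variables (R : realType) (V : normedModType R).

Lemma closed_norm_le (B : R) : closed [set x : V | `|x| <= B].
Proof.
apply: (@preimage_closed _ _ (@Num.norm _ V) [set y : R | y <= B]); last exact: closed_le.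
by move=> x _; exact: norm_continuous.
Qed.

Lemma closed_norm_eq (B : R) : closed [set x : V | `|x| = B].
Proof.
apply: (@preimage_closed _ _ (@Num.norm _ V) [set y : R | y = B]); last exact: closed_eq.
by move=> x _; exact: norm_continuous.
Qed.

Lemma unbounded_far (A : set V) (x : V) (r : R) :
  ~ bounded_set A -> exists2 b, A b & r < `|b - x|.
Proof.
move=> unbA; apply: contra_notP unbA => far.
exists (r + `|x|); split; first exact: num_real.
move=> M rM b Ab /=; apply: le_trans (ltW rM).
rewrite -[b](subrK x); apply: le_trans (ler_normD _ _) _; rewrite lerD2r.
by rewrite leNgt; apply/negP => rb; apply: far; exists b.
Qed.

Lemma connected_unbounded_sphere (A : set V) (x : V) (r : R) :
  connected A -> ~ bounded_set A -> A x -> 0 <= r ->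
  exists2 a, A a & `|a - x| = r.
Proof.
move=> cA unbA Ax r_ge0; have [b Ab rb] := unbounded_far x r unbA.
have dist_cont : continuous (fun a : V => `|a - x|).
  move=> z; apply: (continuous_comp (f := fun a => a - x)); last first.
    exact: norm_continuous.
  by apply: cvgB; [exact: cvg_id | exact: cvg_cst].
have /connected_intervalP itv :=
  connected_continuous_connected cA (continuous_subspaceT dist_cont).
have [] := itv 0 `|b - x| _ _ r.
- by exists x => //; rewrite subrr normr0.
- by exists b.
- by rewrite r_ge0 ltW.
by move=> a Aa <-; exists a.
Qed.

Lemma dist_set_le (A : set V) (x a : V) : A a -> dist_set x A <= `|x - a|.
Proof.
move=> Aa; apply: ge_inf; last by exists a.
by exists 0 => _ [b _ <-].
Qed.

Lemma cluster_seq_near (u : nat -> V) (y : V) (eps : R) (k : nat) :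
  cluster (u @ \oo) y -> 0 < eps -> exists2 j, (k <= j)%N & `|y - u j| < eps.
Proof.
move=> clu eps_gt0.
have [_ [[j kj <-] yuj]] : [set u j | j in [set j | (k <= j)%N]]
    `&` ball y eps !=set0.
  by apply: clu; [exists k => // j kj; exists j | exact: nbhsx_ballx].
by exists j => //; move: yuj; rewrite -ball_normE.
Qed.

End NormedSpace.

Lemma mx_norm_coord (R : realType) n (c : 'rV[R]_n) i : `|c ord0 i| <= `|c|.
Proof.
have /mapP[j _ ->] : `|c ord0 i| \in [seq `|c x.1 x.2| | x : 'I_1 * 'I_n].
  by apply/mapP; exists (ord0, i) => //=; rewrite mem_enum.
by rewrite [leRHS]/Num.Def.normr /= mx_normrE; apply/bigmax_geP; right; exists j.
Qed.

Section Coordinates.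
Variables (R : realType) (X : normedModType R).

Definition lincomb n (e : 'I_n -> X) (c : 'rV[R]_n) : X :=
  \sum_(i < n) c ord0 i *: e i.

Definition spanning n (e : 'I_n -> X) := forall x, exists c, x = lincomb e c.

Lemma lincombB n (e : 'I_n -> X) c d :
  lincomb e (c - d) = lincomb e c - lincomb e d.
Proof. by rewrite /lincomb -sumrB; apply: eq_bigr => i _; rewrite !mxE scalerBl. Qed.

Lemma lincombZ n (e : 'I_n -> X) a c : lincomb e (a *: c) = a *: lincomb e c.
Proof. by rewrite /lincomb scaler_sumr; apply: eq_bigr => i _; rewrite !mxE scalerA. Qed.

Lemma lincomb_norm_le n (e : 'I_n -> X) c :
  `|lincomb e c| <= `|c| * \sum_(i < n) `|e i|.
Proof.
rewrite mulr_sumr; apply: le_trans (ler_norm_sum _ _ _) _.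
by apply: ler_sum => i _; rewrite normrZ ler_wpM2r // mx_norm_coord.
Qed.

Lemma lincomb_continuous n (e : 'I_n -> X) : continuous (lincomb e).
Proof.
move=> c; apply/(@cvgrPdist_lt _ _ _ _ (nbhs_filter c)) => eps eps_gt0.
have K_gt0 : 0 < \sum_(i < n) `|e i| + 1 by rewrite ltr_wpDl ?sumr_ge0.
apply/nbhs_ballP; exists (eps / (\sum_(i < n) `|e i| + 1)).
  by rewrite /= divr_gt0.
move=> d; rewrite -ball_normE /= -lincombB ltr_pdivlMr // => cd.
apply: le_lt_trans (lincomb_norm_le _ _) (le_lt_trans _ cd).
by rewrite ler_wpM2l // lerDl.
Qed.

(* A nontrivial relation [lincomb e c = 0] with [c j != 0] lets [e j] be
   dropped: it is a combination of the other vectors. *)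
Lemma exists_free_spanning n (e : 'I_n -> X) : spanning e ->
  exists m (f : 'I_m -> X), spanning f /\ forall c, lincomb f c = 0 -> c = 0.
Proof.
elim: n e => [e spe|n IH e spe].
  by exists 0%N, e; split => // c _; apply/rowP => -[].
have [free|] := pselect (forall c, lincomb e c = 0 -> c = 0).
  by exists n.+1, e.
move=> /existsNP[c /not_implyP[ec0 c_neq0]].
have [j cj] : exists j, c ord0 j != 0.
  apply: contra_notP c_neq0 => c0; apply/rowP => j; rewrite mxE.
  by apply/eqP/negPn/negP => cj; apply: c0; exists j.
apply: (IH (fun i => e (lift j i))) => x; have [d ->] := spe x.
pose t := d ord0 j / c ord0 j.
exists (\row_k (d ord0 (lift j k) - t * c ord0 (lift j k))).
have -> : lincomb e d = lincomb e (d - t *: c).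
  by rewrite lincombB lincombZ ec0 scaler0 subr0.
rewrite /lincomb (bigD1_ord j) //= !mxE divfK // subrr scale0r add0r.
by apply: eq_bigr => k _; rewrite !mxE.
Qed.

Lemma lincomb_norm_ge n (e : 'I_n -> X) :
  (forall c, lincomb e c = 0 -> c = 0) ->
  exists2 m, 0 < m & forall c, m * `|c| <= `|lincomb e c|.
Proof.
move=> free; pose S := [set c : 'rV[R]_n | `|c| = 1].
have normalize c : c != 0 -> S (`|c|^-1 *: c).
  by move=> c0; rewrite /S /= normrZ normfV normr_id mulVf ?normr_eq0.
have [[s Ss]|S0] := pselect (S !=set0); last first.
  exists 1 => // c; have [->|c0] := eqVneq c 0; first by rewrite normr0 mulr0.
  by exfalso; apply: S0; exists (`|c|^-1 *: c); exact: normalize.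
have cS : compact S.
  apply: bounded_closed_compact; last exact: closed_norm_eq.
  by exists 1; split => [|M M1 x /= ->]; [exact: num_real | exact: ltW].
have [cm cmS cm_min] := EVT_min_rV (ex_intro _ s Ss) cS
  (continuous_subspaceT (fun c =>
     continuous_comp (@lincomb_continuous _ e c) (@norm_continuous _ X _))).
exists `|lincomb e cm|.
  rewrite normr_gt0; apply/eqP => /free cm0.
  by move: cmS; rewrite inE /S /= cm0 normr0 => /esym/eqP; rewrite oner_eq0.
move=> c; have [->|c0] := eqVneq c 0; first by rewrite normr0 mulr0.
have := cm_min _ (mem_set (normalize c c0)).
by rewrite /comp lincombZ normrZ normfV normr_id -ler_pdivlMr ?normr_gt0 // mulrC.
Qed.

(* For a free spanning family [f], the ball is a closed subset of the
   continuous image under [lincomb f] of a compact ball of coordinates,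
   thanks to the lower bound of [lincomb_norm_ge]. *)
Lemma finite_dim_closed_ball_compact (B : R) :
  finite_dim X -> compact [set x : X | `|x| <= B].
Proof.
move=> [n [e spe]].
have [m [f [spf free]]] : exists m (f : 'I_m -> X),
    spanning f /\ forall c, lincomb f c = 0 -> c = 0.
  apply: exists_free_spanning => x; have [c ->] := spe x.
  by exists (\row_i c i); apply: eq_bigr => i _; rewrite mxE.
have [k k_gt0 fk] := lincomb_norm_ge free.
pose C := [set c : 'rV[R]_m | `|c| <= B / k].
have cC : compact C.
  apply: bounded_closed_compact; last exact: closed_norm_le.
  by exists (B / k); split => [|M kM c /= /le_trans->//]; [exact: num_real|exact: ltW].
have cfC : compact (lincomb f @` C).
  exact: continuous_compact (continuous_subspaceT (@lincomb_continuous _ f)) cC.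
apply: subclosed_compact (@closed_norm_le _ X B) cfC _ => x /=.
have [c ->] := spf x => cB; exists c => //.
by rewrite /C /= ler_pdivlMr // mulrC (le_trans (fk c)).
Qed.

End Coordinates.

Theorem mainTheorem7 (R : realType) (X : normedModType R) (A : nat -> set X) :
  finite_dim X ->
  (forall n, A n.+1 `<=` A n) ->
  (forall n, ~ bounded_set (A n)) ->
  (forall n, connected (A n)) ->
  \bigcap_n A n = set0 \/
  (forall eps : R, 0 < eps -> ~ bounded_set (\bigcap_n fattening (A n) eps)).
Proof.
move=> fdX nest unb conn.
have [->|/set0P[x0 Ax0]] := eqVneq (\bigcap_n A n) set0; [by left|right].
move=> eps eps_gt0 [M [_ fatM]].
pose r := `|M| + `|x0| + eps + 1.
have r_ge0 : 0 <= r by rewrite /r; have := normr_ge0 M; have := normr_ge0 x0; lra.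
have sphere k : exists b, A k b /\ `|b - x0| = r.
  have [b Ab bx0] := connected_unbounded_sphere (conn k) (unb k) (Ax0 k I) r_ge0.
  by exists b.
have [a Aa] := choice sphere.
have a_le k : `|a k| <= r + `|x0|.
  by rewrite -(Aa k).2; have := ler_normD (a k - x0) x0; rewrite subrK.
have [y [_ ycl]] : [set x : X | `|x| <= r + `|x0|] `&` cluster (a @ \oo) !=set0.
  apply: finite_dim_closed_ball_compact fdX _ _ _.
  by exists 0%N => // k _; exact: a_le.
have y_fat : (\bigcap_n fattening (A n) eps) y.
  move=> k _; have [j kj yaj] := cluster_seq_near k ycl eps_gt0.
  apply: le_trans (ltW yaj); apply: dist_set_le.
  exact: nested_subset nest k j kj _ (Aa j).1.
have [j _ yaj] := cluster_seq_near 0 ycl eps_gt0.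
have y_far : `|M| + 1 < `|y|.
  have := ler_distD y (a j) x0; have := ler_normB y x0.
  by rewrite [`|a j - y|]distrC (Aa j).2 /r; lra.
have y_le : `|y| <= M + 1 by apply: fatM y_fat; rewrite ltrDl.
by have := ler_norm M; lra.
Qed.
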